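(* Let $\mathcal{H}$ be a complex Hilbert space of finite dimension $n\ge2$, $m\ge2$, $\sigma$ a self-adjoint operator on $\mathcal{H}$, and $\rho$ a density operator on $\mathcal{H}^{\otimes m}$. (a) If $\rho$ is $\sigma$SMC then $\rho$ is $\sigma$EC; the converse is not true in general. (b) If $\sigma$ has nondegenerate spectrum and $\rho$ is $\sigma$SMC, then $\rho$ is RSC; the converse is not true in general. (c) If $\sigma$ has nondegenerate spectrum and $\rho$ is $\sigma$SMC, then $\rho$ is SSC; the converse is not true in general.
   Context: For $X$ an operator on $\mathcal{H}$, $X^{(i)}=I^{\otimes(i-1)}\otimes X\otimes I^{\otimes(m-i)}$. For a permutation $\pi$ of $\{1,\dots,m\}$, $U_\pi$ is the unitary on $\mathcal{H}^{\otimes m}$ with $U_\pi(X_1\otimes\cdots\otimes X_m)U_\pi^\dagger=X_{\pi(1)}\otimes\cdots\otimes X_{\pi(m)}$. Definitions: $\rho$ is $\sigma$EC ($\sigma$-expectation consensus) if $\mathrm{Tr}(\sigma^{(1)}\rho)=\cdots=\mathrm{Tr}(\sigma^{(m)}\rho)$; $\rho$ is RSC (reduced state consensus) if the reduced states $\bar\rho_k=\mathrm{Tr}_{\bigotimes_{j\ne k}\mathcal{H}_j}(\rho)$ are all equal; $\rho$ is SSC (symmetric state consensus) if $U_\pi\rho U_\pi^\dagger=\rho$ for all $\pi$; writing $\sigma=\sum_j s_j\Pi_j$ with distinct $s_j$ and spectral projectors $\Pi_j$, $\rho$ is $\sigma$SMC (single $\sigma$-measurement consensus) if $\mathrm{Tr}(\Pi_j^{(k)}\Pi_j^{(\ell)}\rho)=\mathrm{Tr}(\Pi_j^{(\ell)}\rho)$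 for all $k,\ell$ and all $j$. ''Not true in general'' means there exist $m,n,\sigma$ and states for which the converse implication fails. *)

(* Finite-dimensional complex Hilbert space H = C^n, where C is
   an arbitrary numClosedFieldType (e.g. complex R for R a real type).
   Operators on H are 'M[C]_n; operators on H^{(x)m} are matrices indexed by the
   tensor basis {ffun 'I_m -> 'I_n} (basis vector |x_1 ... x_m>), enumerated via
   enum_rank / enum_val. *)
From HB Require Import structures.
From mathcomp Require Import all_boot all_order all_algebra all_fingroup.
From mathcomp Require Export sesquilinear spectral.
Set Implicit Arguments. Unset Strict Implicit. Unset Printing Implicit Defensive.
Import Order.TTheory GRing.Theory Num.Theory.
Local Open Scope ring_scope.
Local Open Scope sesquilinear_scope.

Section QDefs.
Variable C : numClosedFieldType.

Definition tidx (m n : nat) := {ffun 'I_m -> 'I_n}.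
Definition tdim (m n : nat) := #|{ffun 'I_m -> 'I_n}|.

Definition selfadj k (A : 'M[C]_k) : Prop := A \is hermsymmx.

Definition psdmx k (A : 'M[C]_k) : Prop :=
  forall v : 'cV[C]_k, 0 <= ((v ^t*) *m A *m v) 0 0.
Definition density k (A : 'M[C]_k) : Prop := psdmx A /\ \tr A = 1.

(* X^{(i)} = I^{(x)(i-1)} (x) X (x) I^{(x)(m-i)} *)
Definition embed m n (X : 'M[C]_n) (i : 'I_m) : 'M[C]_(tdim m n) :=
  \matrix_(a, b)
    (let x : tidx m n := enum_val a in let y : tidx m n := enum_val b in
     if [forall j, (j != i) ==> (x j == y j)] then X (x i) (y i) else 0).

(* permutation unitary U_pi : |x_1..x_m> |-> |x_{pi 1} .. x_{pi m}>, so that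
   U_pi (X_1 (x)..(x) X_m) U_pi^* = X_{pi 1} (x) .. (x) X_{pi m} *)
Definition permU m n (pi : 'S_m) : 'M[C]_(tdim m n) :=
  \matrix_(a, b)
    (let x : tidx m n := enum_val a in let y : tidx m n := enum_val b in
     if x == [ffun k => y (pi k)] then 1 else 0).

(* reduced state on the k-th factor (partial trace over all other factors) *)
Definition reduced m n (rho : 'M[C]_(tdim m n)) (k : 'I_m) : 'M[C]_n :=
  \matrix_(i, j) \sum_(x : tidx m n) \sum_(y : tidx m n
      | [&& x k == i, y k == j & [forall l, (l != k) ==> (x l == y l)]])
      rho (enum_rank x) (enum_rank y).

Definition spectral_decomp n (sigma : 'M[C]_n) (r : nat) (s : 'I_r -> C)
    (P : 'I_r -> 'M[C]_n) : Prop :=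
  [/\ injective s,
      forall j, P j != 0 /\ selfadj (P j) /\ P j *m P j = P j,
      forall j j', j != j' -> P j *m P j' = 0,
      \sum_j P j = 1%:M
    & sigma = \sum_j s j *: P j].

Definition sigmaEC m n (sigma : 'M[C]_n) (rho : 'M[C]_(tdim m n)) : Prop :=
  forall k l : 'I_m, \tr (embed sigma k *m rho) = \tr (embed sigma l *m rho).

Definition RSC m n (rho : 'M[C]_(tdim m n)) : Prop :=
  forall k l : 'I_m, reduced rho k = reduced rho l.

Definition SSC m n (rho : 'M[C]_(tdim m n)) : Prop :=
  forall pi : 'S_m, permU n pi *m rho *m (permU n pi) ^t* = rho.

(* single sigma-measurement consensus, w.r.t. the spectral decomposition of
   sigma (unique up to relabelling, so the choice of decomposition is immaterial) *)
Definition sigmaSMC m n (sigma : 'M[C]_n) (rho : 'M[C]_(tdim m n)) : Prop :=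
  exists r (s : 'I_r -> C) (P : 'I_r -> 'M[C]_n),
    spectral_decomp sigma s P /\
    forall (j : 'I_r) (k l : 'I_m),
      \tr (embed (P j) k *m embed (P j) l *m rho) = \tr (embed (P j) l *m rho).

Definition simple_spectrum n (sigma : 'M[C]_n) : Prop :=
  exists s : 'I_n -> C, injective s /\ forall i, eigenvalue sigma (s i).

End QDefs.

From HB Require Import structures.
From mathcomp Require Import all_boot all_order all_algebra all_fingroup.
From mathcomp Require Import sesquilinear spectral ring.
Set Implicit Arguments. Unset Strict Implicit. Unset Printing Implicit Defensive.
Import Order.TTheory GRing.Theory Num.Theory.
Local Open Scope ring_scope.
Local Open Scope sesquilinear_scope.

(* Conjugate by the tensor power [W] of a unitary diagonalising [sigma].  When
   [sigma] has simple spectrum, every spectral projector becomes the projector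
   onto one basis vector, so the SMC identities force the conjugated state
   [W^* rho W] to vanish on the diagonal at every label [x_1 ... x_m] that is not
   constant; positivity then kills the corresponding rows and columns.  A state
   supported on the span of the [W |x ... x>] is invariant under permutations of
   the factors and all its reduced states coincide.  Part (a) only needs that the
   embedded projectors commute.  For the counterexamples take [sigma = diag(0,1)]
   and the maximally mixed state on two qubits: SMC would give
   [(tr P)^2 = 2 tr P] for each spectral projector [P], i.e. [P = 1], and [sigma]
   would be scalar. *)

Section TensorProduct.
Variables (C : numClosedFieldType) (m n : nat).
Local Notation N := (tdim m n).
Local Notation T := (tidx m n).

Lemma tidx_matrixP (A B : 'M[C]_N) :
  (forall x y : T, A (enum_rank x) (enum_rank y) = B (enum_rank x) (enum_rank y)) ->
  A = B.
Proof. by move=> eqAB; apply/matrixP => a b; rewrite -(enum_valK a) -(enum_valK b). Qed.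

Lemma sum_tidx (F : 'I_N -> C) : \sum_c F c = \sum_(x : T) F (enum_rank x).
Proof. by rewrite (reindex (@enum_rank T)) //; exact/onW_bij/enum_rank_bij. Qed.

Lemma sum_delta (x0 : T) (F : T -> C) :
  \sum_(x : T) (if x == x0 then 1 else 0) * F x = F x0.
Proof. by rewrite (bigD1 x0) //= eqxx mul1r big1 ?addr0 // => x /negbTE ->; rewrite mul0r. Qed.

Definition tensmx (A : 'I_m -> 'M[C]_n) : 'M[C]_N :=
  \matrix_(a, b) \prod_i A i ((enum_val a : T) i) ((enum_val b : T) i).

Lemma eq_tensmx A B : A =1 B -> tensmx A = tensmx B.
Proof. by move=> eqAB; apply/matrixP => a b; rewrite !mxE; apply: eq_bigr => i _; rewrite eqAB. Qed.

Lemma tensmxE A x y : tensmx A (enum_rank x) (enum_rank y) = \prod_i A i (x i) (y i).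
Proof. by rewrite mxE !enum_rankK. Qed.

Lemma tensmxM A B : tensmx A *m tensmx B = tensmx (fun i => A i *m B i).
Proof.
apply/tidx_matrixP => x y; rewrite mxE sum_tidx tensmxE /=.
under [LHS]eq_bigr => z _ do rewrite !tensmxE -big_split.
under [RHS]eq_bigr => i _ do rewrite mxE.
by rewrite bigA_distr_bigA.
Qed.

Lemma tensmx_adj A : (tensmx A)^t* = tensmx (fun i => (A i)^t*).
Proof. by apply/matrixP => a b; rewrite !mxE rmorph_prod; apply: eq_bigr => i _; rewrite !mxE. Qed.

Lemma tensmx1 : tensmx (fun _ => 1%:M) = 1%:M.
Proof.
apply/tidx_matrixP => x y; rewrite tensmxE !mxE (inj_eq enum_rank_inj).
have [<-|nxy] := eqVneq x y; first by rewrite big1 // => i _; rewrite mxE eqxx.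
have /existsP[i nxyi] : [exists i, x i != y i].
  by rewrite -negb_forall; apply: contra nxy => /forallP eqxy; apply/eqP/ffunP => i; apply/eqP.
by rewrite (bigD1 i) //= mxE (negbTE nxyi) mul0r.
Qed.

Lemma mxtrace_tensmx A : \tr (tensmx A) = \prod_i \tr (A i).
Proof.
rewrite /mxtrace sum_tidx; under [LHS]eq_bigr => x _ do rewrite tensmxE.
by rewrite bigA_distr_bigA.
Qed.

Definition factor_at (X : 'M[C]_n) (k : 'I_m) (i : 'I_m) := if i == k then X else 1%:M.

Lemma embed_tensmx (X : 'M[C]_n) k : embed X k = tensmx (factor_at X k).
Proof.
apply/matrixP => a b; rewrite !mxE (bigD1 k) //= /factor_at eqxx.
case: ifP => [/forallP eq_off_k|/negbT/forallPn [i]].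
  rewrite big1 ?mulr1 // => i ik; rewrite (negbTE ik) mxE.
  by rewrite (implyP (eq_off_k i) ik).
rewrite negb_imply => /andP [ik nxyi].
by rewrite (bigD1 i) //= (negbTE ik) mxE (negbTE nxyi) mul0r mulr0.
Qed.

Lemma embedE (X : 'M[C]_n) k (x y : T) : embed X k (enum_rank x) (enum_rank y) =
  if [forall j, (j != k) ==> (x j == y j)] then X (x k) (y k) else 0.
Proof. by rewrite mxE /= !enum_rankK. Qed.

Lemma embed_comm (X : 'M[C]_n) (k l : 'I_m) : embed X k *m embed X l = embed X l *m embed X k.
Proof.
rewrite !embed_tensmx !tensmxM; apply: eq_tensmx => i; rewrite /factor_at.
by case: (i == k); case: (i == l); rewrite ?mulmx1 ?mul1mx.
Qed.

Lemma embed_sumZ r (s : 'I_r -> C) (P : 'I_r -> 'M[C]_n) (k : 'I_m) :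
  embed (\sum_j s j *: P j) k = \sum_j s j *: embed (P j) k.
Proof.
apply/matrixP => a b; rewrite summxE mxE /=.
case: ifP => off_k; last by rewrite big1 // => j _; rewrite !mxE /= off_k mulr0.
by rewrite summxE; apply: eq_bigr => j _; rewrite !mxE /= off_k.
Qed.

Lemma mxtrace_embed (X : 'M[C]_n) (k : 'I_m) :
  \tr (embed X k) = \tr X * \tr (1%:M : 'M[C]_n) ^+ m.-1.
Proof.
rewrite embed_tensmx mxtrace_tensmx (bigD1 k) //= /factor_at eqxx.
under eq_bigr => i /negbTE -> do [].
by rewrite prodr_const cardC1 card_ord.
Qed.

Lemma reduced_mxtrace (rho : 'M[C]_N) k a b :
  reduced rho k a b = \tr (rho *m embed (delta_mx b a) k).
Proof.
rewrite mxE /mxtrace sum_tidx; apply: eq_bigr => x _.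
rewrite mxE sum_tidx big_mkcond /=; apply: eq_bigr => y _.
rewrite embedE mxE.
have -> : [forall j, (j != k) ==> (y j == x j)] = [forall j, (j != k) ==> (x j == y j)].
  by apply: eq_forallb => j; rewrite [y j == _]eq_sym.
by case: [forall _, _]; case: (x k == a); case: (y k == b); rewrite /= ?mulr1 ?mulr0.
Qed.

Definition relabel (pi : 'S_m) (x : T) : T := [ffun k => x (pi k)].

Lemma relabel_eqE pi x y : (x == relabel pi y) = (y == relabel (pi^-1)%g x).
Proof. by apply/eqP/eqP => ->; apply/ffunP => k; rewrite !ffunE ?permKV ?permK. Qed.

Lemma relabel_inj pi : injective (relabel pi).
Proof.
by move=> x y /ffunP eqxy; apply/ffunP => k; have := eqxy ((pi^-1)%g k); rewrite !ffunE permKV.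
Qed.

Lemma permUE pi (x y : T) :
  permU C n pi (enum_rank x) (enum_rank y) = if x == relabel pi y then 1 else 0.
Proof. by rewrite mxE /= !enum_rankK. Qed.

Lemma permU_adj pi : (permU C n pi)^t* = permU C n (pi^-1)%g :> 'M[C]_N.
Proof.
apply/tidx_matrixP => x y; rewrite !mxE /= !enum_rankK.
rewrite -/(relabel pi x) -/(relabel (pi^-1)%g y) relabel_eqE.
by case: ifP; rewrite ?rmorph1 ?rmorph0.
Qed.

Lemma permU_unitary pi : permU C n pi *m (permU C n pi)^t* = 1%:M :> 'M[C]_N.
Proof.
rewrite permU_adj; apply/tidx_matrixP => x y; rewrite mxE sum_tidx.
under eq_bigr => z _ do rewrite !permUE relabel_eqE.
by rewrite sum_delta !mxE (inj_eq enum_rank_inj) (inj_eq (@relabel_inj _)); case: eqP.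
Qed.

Lemma permU_tensmx pi (V : 'M[C]_n) :
  permU C n pi *m tensmx (fun _ => V) = tensmx (fun _ => V) *m permU C n pi.
Proof.
apply/tidx_matrixP => x y; rewrite !mxE !sum_tidx.
under eq_bigr => z _ do rewrite permUE relabel_eqE tensmxE.
under [RHS]eq_bigr => z _ do rewrite permUE tensmxE mulrC.
rewrite !sum_delta (reindex_inj (@perm_inj _ pi)) /=.
by apply: eq_bigr => i _; rewrite !ffunE permK.
Qed.

End TensorProduct.

Section PositiveSemidefinite.
Variable C : numClosedFieldType.

Lemma real_affine_ge0_slope0 (c d : C) :
  (forall l : C, l \is Num.real -> 0 <= l * c + d) -> c = 0.
Proof.
move=> ge0_affine; have d_ge0 : 0 <= d by have := ge0_affine 0 (rpred0 _); rewrite mul0r add0r.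
have dR : d \is Num.real := ger0_real d_ge0.
have cR : c \is Num.real.
  have := ger0_real (ge0_affine 1 (rpred1 _)); rewrite mul1r => cdR.
  by have := rpredB cdR dR; rewrite addrK.
apply/eqP; apply: contraT => c_neq0.
have lR : (- (d + 1) / c) \is Num.real by rewrite rpredM ?rpredN ?rpredD ?rpred1 // realV.
have := ge0_affine _ lR; rewrite divfK // opprD addrAC addNr.
by rewrite add0r oppr_ge0 ler10.
Qed.

Lemma mxquadE k (A : 'M[C]_k) (v : 'cV[C]_k) :
  (v ^t* *m A *m v) 0 0 = \sum_a \sum_b (v a 0)^* * A a b * v b 0.
Proof.
rewrite mxE exchange_big; apply: eq_bigr => b _.
by rewrite mxE mulr_suml; apply: eq_bigr => a _; rewrite !mxE.
Qed.

Lemma mxquad_pair k (A : 'M[C]_k) (x y : 'I_k) (t : C) : x != y ->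
  let v := \col_i (if i == x then t else if i == y then 1 else 0) in
  (v ^t* *m A *m v) 0 0 = t^* * t * A x x + t^* * A x y + t * A y x + A y y.
Proof.
move=> nxy v.
have vx : v x 0 = t by rewrite /v mxE eqxx.
have vy : v y 0 = 1 by rewrite /v mxE eq_sym (negbTE nxy) eqxx.
have v0 a : a != x -> a != y -> v a 0 = 0.
  by move=> ax ay; rewrite /v mxE (negbTE ax) (negbTE ay).
have row_sum a : \sum_b (v a 0)^* * A a b * v b 0 = (v a 0)^* * (A a x * t + A a y).
  rewrite (bigD1 x) //= (bigD1 y) /=; last by rewrite eq_sym nxy.
  rewrite big1 ?addr0; first by rewrite vx vy mulr1 mulrDr !mulrA.
  by move=> b /andP[b_y bx]; rewrite (v0 b) // mulr0.
rewrite mxquadE (eq_bigr _ (fun a _ => row_sum a)).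
rewrite (bigD1 x) //= (bigD1 y) /=; last by rewrite eq_sym nxy.
rewrite big1 ?addr0; last by move=> a /andP[ay ax]; rewrite (v0 a) // rmorph0 mul0r.
rewrite vx vy rmorph1; ring.
Qed.

Lemma psd_diag_ge0 k (A : 'M[C]_k) x : psdmx A -> 0 <= A x x.
Proof.
move=> psdA; have := psdA (\col_i (i == x)%:R); rewrite mxquadE (bigD1 x) //=.
rewrite [X in _ + X]big1 ?addr0; last first.
  by move=> a ax; rewrite big1 // => b _; rewrite mxE (negbTE ax) rmorph0 !mul0r.
rewrite (bigD1 x) //= big1 ?addr0; first by rewrite !mxE eqxx rmorph1 mul1r mulr1.
by move=> b bx; rewrite [v in _ * v]mxE (negbTE bx) mulr0.
Qed.

(* Along [t = l] and [t = 'i l] (l real) the form of [mxquad_pair] is a real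
   affine function of l, so its slopes vanish. *)
Lemma psd_diag0 k (A : 'M[C]_k) x y : psdmx A -> A x x = 0 -> A x y = 0 /\ A y x = 0.
Proof.
move=> psdA Axx0; have [<-|nxy] := eqVneq x y; first by rewrite Axx0.
have form_ge0 t : 0 <= t^* * A x y + t * A y x + A y y.
  have := psdA (\col_i (if i == x then t else if i == y then 1 else 0)).
  by rewrite mxquad_pair // Axx0 mulr0 add0r.
have sum0 : A x y + A y x = 0.
  apply: (@real_affine_ge0_slope0 _ (A y y)) => l lR; have := form_ge0 l.
  by rewrite (conj_Creal lR) mulrDr.
have diff0 : 'i * (A y x - A x y) = 0.
  apply: (@real_affine_ge0_slope0 _ (A y y)) => l lR; have := form_ge0 ('i * l).
  rewrite rmorphM /= conjCi (conj_Creal lR).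
  suff -> : - 'i * l * A x y + 'i * l * A y x = l * ('i * (A y x - A x y)) by [].
  by ring.
move/eqP: diff0; rewrite mulf_eq0 (negbTE (@neq0Ci C)) /= subr_eq0 => /eqP eqyx.
move: sum0; rewrite eqyx -mulr2n -mulr_natr => /eqP; rewrite mulf_eq0 pnatr_eq0 orbF.
by move/eqP => ->.
Qed.

End PositiveSemidefinite.

Lemma sigmaSMC_EC (C : numClosedFieldType) m n (sigma : 'M[C]_n) (rho : 'M[C]_(tdim m n)) :
  sigmaSMC sigma rho -> sigmaEC sigma rho.
Proof.
case=> r [s [P [[_ _ _ _ ->] SMC]]] k l.
rewrite !embed_sumZ !mulmx_suml !raddf_sum /=; apply: eq_bigr => j _.
rewrite -!scalemxAl !mxtraceZ; congr (_ * _).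
by rewrite -(SMC j l k) embed_comm SMC.
Qed.

Lemma spectral_decompM (C : numClosedFieldType) n (sigma : 'M[C]_n) r (s : 'I_r -> C) P :
  spectral_decomp sigma s P ->
  forall j, sigma *m P j = s j *: P j /\ P j *m sigma = s j *: P j.
Proof.
case=> _ projP orthP _ -> j; split.
  rewrite mulmx_suml (bigD1 j) //= big1 ?addr0; first by rewrite -scalemxAl (projP j).2.2.
  by move=> i ij; rewrite -scalemxAl orthP ?scaler0.
rewrite mulmx_sumr (bigD1 j) //= big1 ?addr0; first by rewrite -scalemxAr (projP j).2.2.
by move=> i ij; rewrite -scalemxAr orthP ?scaler0 // eq_sym.
Qed.

Section ConstantLabels.
Variables (C : numClosedFieldType) (m n : nat).
Local Notation N := (tdim m n).
Local Notation T := (tidx m n).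

Definition const_tidx (x : T) := [forall i, forall j, x i == x j].

Lemma const_tidxP (x : T) : const_tidx x -> forall i j, x i = x j.
Proof. by move=> /forallP constx i j; apply/eqP; move/forallP: (constx i). Qed.

Definition const_proj : 'M[C]_N := diag_mx (\row_a (const_tidx (enum_val a))%:R).

Lemma const_proj_sandwichE (A : 'M[C]_N) x y :
  (const_proj *m A *m const_proj) (enum_rank x) (enum_rank y) =
  (const_tidx x)%:R * A (enum_rank x) (enum_rank y) * (const_tidx y)%:R.
Proof. by rewrite mul_mx_diag mul_diag_mx !mxE !enum_rankK. Qed.

Lemma const_proj_adj : const_proj ^t* = const_proj.
Proof.
apply/matrixP => a b; rewrite !mxE eq_sym.
by case: eqP => [->|_]; rewrite ?mulr0n ?mulr1n ?rmorph0 // conjC_nat.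
Qed.

Lemma permU_const_proj pi : permU C n pi *m const_proj = const_proj.
Proof.
apply/tidx_matrixP => x y; rewrite mul_mx_diag !mxE /= !enum_rankK (inj_eq enum_rank_inj).
case cy: (const_tidx y); last by rewrite mulr0; case: eqP => // ->; rewrite cy mulr0n.
have -> : [ffun k => y (pi k)] = y by apply/ffunP => k; rewrite ffunE (const_tidxP cy (pi k) k).
by case: eqP => [->|_]; rewrite ?cy ?mulr1 ?mul0r ?mulr1n ?mulr0n.
Qed.

Lemma const_proj_permU_adj pi : const_proj *m (permU C n pi)^t* = const_proj.
Proof. by rewrite -[in LHS]const_proj_adj -map_mxM -trmx_mul permU_const_proj const_proj_adj. Qed.

Hypothesis m_gt1 : (1 < m)%N.

(* On constant labels the side condition of [embed] only sees one factor,
   so the factor carrying [X] does not matter. *)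
Lemma const_proj_embed (X : 'M[C]_n) k l :
  const_proj *m embed X k *m const_proj = const_proj *m embed X l *m const_proj.
Proof.
have embed_const (k' : 'I_m) (x y : T) : const_tidx x -> const_tidx y ->
    embed X k' (enum_rank x) (enum_rank y) = if x k' == y k' then X (x k') (y k') else 0.
  move=> /const_tidxP constx /const_tidxP consty; rewrite embedE.
  have [j jk] : exists j : 'I_m, j != k'.
    have : (0 < #|predC1 k'|)%N by rewrite cardC1 card_ord; case: m m_gt1 => [|[|]].
    by case/card_gt0P => j; rewrite inE => jk; exists j.
  suff -> : [forall j, (j != k') ==> (x j == y j)] = (x k' == y k') by [].
  apply/forallP/idP => [/(_ j)|/eqP e i]; first by rewrite jk /= (constx j k') (consty j k').
  by apply/implyP => _; rewrite (constx i k') (consty i k') e.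
apply/tidx_matrixP => x y; rewrite !const_proj_sandwichE.
case cx: (const_tidx x); last by rewrite !mul0r.
case cy: (const_tidx y); last by rewrite !mulr0.
by rewrite !embed_const // (const_tidxP cx k l) (const_tidxP cy k l).
Qed.

End ConstantLabels.

Section ConstantSupport.
Variables (C : numClosedFieldType) (m n : nat) (V : 'M[C]_n) (A : 'M[C]_(tdim m n)).
Local Notation W := (tensmx (fun _ : 'I_m => V)).
Local Notation D := (const_proj C m n).

Lemma tensmx_conj_embed (X : 'M[C]_n) k : V^t* *m V = 1%:M ->
  W^t* *m embed X k *m W = embed (V^t* *m X *m V) k.
Proof.
move=> VV1; rewrite !embed_tensmx tensmx_adj !tensmxM; apply: eq_tensmx => i.
by rewrite /factor_at; case: (i == k); rewrite ?mulmx1.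
Qed.

Lemma const_support_RSC : (1 < m)%N -> V^t* *m V = 1%:M -> RSC (W *m (D *m A *m D) *m W^t*).
Proof.
move=> m_gt1 VV1 k l; apply/matrixP => a b; rewrite !reduced_mxtrace.
have move_conj k' : \tr (W *m (D *m A *m D) *m W^t* *m embed (delta_mx b a) k') =
    \tr (A *m (D *m embed (V^t* *m delta_mx b a *m V) k' *m D)).
  rewrite -tensmx_conj_embed // -!mulmxA [LHS]mxtrace_mulC -!mulmxA.
  by rewrite [LHS]mxtrace_mulC -!mulmxA.
by rewrite !move_conj (const_proj_embed m_gt1 _ k l).
Qed.

Lemma const_support_SSC : SSC (W *m (D *m A *m D) *m W^t*).
Proof.
move=> pi; set U := permU C n pi.
have adj_comm : W^t* *m U^t* = U^t* *m W^t*.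
  by rewrite -!map_mxM -!trmx_mul permU_tensmx.
have -> : U *m (W *m (D *m A *m D) *m W^t*) *m U^t* =
    W *m ((U *m D) *m A *m (D *m U^t*)) *m W^t*.
  by rewrite !mulmxA permU_tensmx -!mulmxA adj_comm.
by rewrite permU_const_proj const_proj_permU_adj.
Qed.

End ConstantSupport.

Lemma selfadj_adj (C : numClosedFieldType) k (A : 'M[C]_k) : selfadj A -> A^t* = A.
Proof. by rewrite /selfadj is_hermitianmxE expr0 scale1r => /eqP <-. Qed.

Lemma spectralmx_unitary (C : numClosedFieldType) n (A : 'M[C]_n) :
  spectralmx A *m (spectralmx A)^t* = 1%:M.
Proof. exact/unitarymxP/spectral_unitarymx. Qed.

Section SimpleSpectrum.
Variables (C : numClosedFieldType) (n : nat) (sigma : 'M[C]_n).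
Hypotheses (sigma_sa : selfadj sigma) (sigma_simple : simple_spectrum sigma).
Local Notation B := (spectralmx sigma).
Local Notation d := (spectral_diag sigma).

Lemma spectralmx_adj_unitary : B^t* *m B = 1%:M.
Proof. exact/mulmx1C/spectralmx_unitary. Qed.

Lemma spectralmxE : sigma = B^t* *m diag_mx d *m B.
Proof.
have /orthomx_spectralP {1}-> := hermitian_normalmx sigma_sa.
by rewrite invmx_unitary // spectral_unitarymx.
Qed.

Lemma spectral_diagE : B *m sigma *m B^t* = diag_mx d.
Proof.
rewrite {2}spectralmxE !mulmxA spectralmx_unitary mul1mx.
by rewrite -mulmxA spectralmx_unitary mulmx1.
Qed.

Lemma eigenvalue_spectral_diag a : eigenvalue sigma a -> exists b, a = d 0 b.
Proof.
case/eigenvalueP => v sigma_v v_neq0.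
set w := v *m B^t*.
have w_neq0 : w != 0.
  apply: contra v_neq0 => /eqP w0; apply/eqP.
  by rewrite -[v]mulmx1 -spectralmx_adj_unitary mulmxA -/w w0 mul0mx.
have [b wb_neq0] : exists b, w 0 b != 0.
  apply/existsP; apply: contraR w_neq0; rewrite negb_exists => /forallP w0.
  by apply/eqP/matrixP => i j; rewrite ord1 [RHS]mxE; apply/eqP; rewrite -[_ == _]negbK w0.
exists b; have : w *m diag_mx d = a *: w.
  rewrite -spectral_diagE !mulmxA -[w *m B]mulmxA spectralmx_adj_unitary mulmx1.
  by rewrite sigma_v scalemxAl.
move/matrixP/(_ 0 b); rewrite mul_mx_diag mxE [X in _ = X]mxE => /eqP.
by rewrite mulrC -subr_eq0 -mulrBl mulf_eq0 (negbTE wb_neq0) orbF subr_eq0 => /eqP.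
Qed.

Lemma spectral_diag_inj : injective (fun a => d 0 a).
Proof.
case: sigma_simple => t [t_inj t_eig].
have /fin_all_exists [g tg] : forall i, exists b, t i = d 0 b.
  by move=> i; exact: eigenvalue_spectral_diag.
have g_inj : injective g by move=> i j gij; apply: t_inj; rewrite !tg gij.
have [g' gK g'K] := injF_bij g_inj.
move=> a b /= dab; rewrite -(g'K a) -(g'K b) -!tg in dab.
by rewrite -(g'K a) -(g'K b) (t_inj _ _ dab).
Qed.

Variables (r : nat) (s : 'I_r -> C) (P : 'I_r -> 'M[C]_n).
Hypothesis sigma_dec : spectral_decomp sigma s P.
Local Notation Q j := (B *m P j *m B^t*).

Lemma sum_spectral_proj_conj : \sum_j Q j = 1%:M.
Proof.
case: sigma_dec => _ _ _ sumP _.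
by rewrite -mulmx_suml -mulmx_sumr sumP mulmx1 spectralmx_unitary.
Qed.

Lemma spectral_proj_conj0 j a b : (d 0 a != s j) || (d 0 b != s j) -> Q j a b = 0.
Proof.
have [sigmaP Psigma] := spectral_decompM sigma_dec j.
have left_eig : diag_mx d *m Q j = s j *: Q j.
  by rewrite -spectral_diagE !mulmxA -[B *m _ *m B^t* *m B]mulmxA spectralmx_adj_unitary
    mulmx1 -[B *m sigma *m P j]mulmxA sigmaP -scalemxAr -scalemxAl.
have right_eig : Q j *m diag_mx d = s j *: Q j.
  by rewrite -spectral_diagE !mulmxA -[B *m _ *m B^t* *m B]mulmxA spectralmx_adj_unitary
    mulmx1 -[B *m P j *m sigma]mulmxA Psigma -scalemxAr -scalemxAl.
case/orP => [da_neq|db_neq].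
  move/matrixP/(_ a b): left_eig; rewrite mul_diag_mx !mxE => /eqP.
  by rewrite -subr_eq0 -mulrBl mulf_eq0 subr_eq0 (negbTE da_neq) => /eqP.
move/matrixP/(_ a b): right_eig; rewrite mul_mx_diag !mxE => /eqP.
by rewrite mulrC -subr_eq0 -mulrBl mulf_eq0 subr_eq0 (negbTE db_neq) => /eqP.
Qed.

Lemma spectral_proj_conjE j a b : Q j a b = ((a == b) && (d 0 a == s j))%:R.
Proof.
have [<-|ab] := eqVneq a b; last first.
  apply: spectral_proj_conj0; apply: contraR ab; rewrite negb_or !negbK => /andP[/eqP da /eqP db].
  by apply/eqP/spectral_diag_inj; rewrite /= da db.
have [da|da_neq] := eqVneq (d 0 a) (s j); last by rewrite spectral_proj_conj0 ?da_neq.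
have := sum_spectral_proj_conj => /matrixP/(_ a a).
rewrite summxE [RHS]mxE eqxx (bigD1 j) //= big1 ?addr0 => [<-//|i ij].
apply: spectral_proj_conj0; rewrite da.
by case: sigma_dec => s_inj _ _ _ _; rewrite (inj_eq s_inj) eq_sym ij.
Qed.

Lemma spectral_decomp_surj a : exists j, s j = d 0 a.
Proof.
suff /existsP[j /eqP] : [exists j, s j == d 0 a] by exists j.
apply: contraT; rewrite negb_exists => /forallP no_j.
have := sum_spectral_proj_conj => /matrixP/(_ a a); rewrite summxE [RHS]mxE eqxx big1.
  by move/eqP; rewrite eq_sym oner_eq0.
by move=> j _; apply: spectral_proj_conj0; rewrite eq_sym no_j.
Qed.

End SimpleSpectrum.

Lemma psdmx_conj (C : numClosedFieldType) k l (A : 'M[C]_k) (M : 'M[C]_(k, l)) :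
  psdmx A -> psdmx (M^t* *m A *m M).
Proof. by move=> psdA v; have := psdA (M *m v); rewrite trmx_mul map_mxM !mulmxA. Qed.

Section SMCSupport.
Variables (C : numClosedFieldType) (m n : nat) (sigma : 'M[C]_n).
Hypotheses (sigma_sa : selfadj sigma) (sigma_simple : simple_spectrum sigma).
Variables (r : nat) (s : 'I_r -> C) (P : 'I_r -> 'M[C]_n).
Hypothesis sigma_dec : spectral_decomp sigma s P.
Variable rho : 'M[C]_(tdim m n).
Hypothesis rho_psd : psdmx rho.
Hypothesis rho_SMC : forall (j : 'I_r) (k l : 'I_m),
  \tr (embed (P j) k *m embed (P j) l *m rho) = \tr (embed (P j) l *m rho).
Local Notation N := (tdim m n).
Local Notation T := (tidx m n).
Local Notation B := (spectralmx sigma).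
Local Notation d := (spectral_diag sigma).
Local Notation Q j := (B *m P j *m B^t*).
Local Notation W := (tensmx (fun _ : 'I_m => B^t*)).
Local Notation rho' := (W^t* *m rho *m W).
Local Notation D := (const_proj C m n).

Lemma tensmx_spectral_unitary : W *m W^t* = 1%:M.
Proof.
rewrite tensmx_adj tensmxM -(tensmx1 C); apply: eq_tensmx => i.
by rewrite trmxCK spectralmx_adj_unitary.
Qed.

Lemma conj_SMC j k l : \tr (embed (Q j) k *m embed (Q j) l *m rho') = \tr (embed (Q j) l *m rho').
Proof.
have BB1 : B^t*^t* *m B^t* = 1%:M by rewrite trmxCK spectralmx_unitary.
have conj_tr X : \tr (X *m rho) = \tr ((W^t* *m X *m W) *m rho').
  rewrite -[in LHS](mul1mx rho) -[in LHS](mulmx1 rho) -tensmx_spectral_unitary.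
  by rewrite !mulmxA mxtrace_mulC !mulmxA.
have conjM X Y : W^t* *m (X *m Y) *m W = (W^t* *m X *m W) *m (W^t* *m Y *m W).
  by rewrite !mulmxA -[W^t* *m X *m W *m W^t*]mulmxA tensmx_spectral_unitary mulmx1.
by have := rho_SMC j k l; rewrite !conj_tr conjM !tensmx_conj_embed // trmxCK.
Qed.

Lemma embed_spectral_proj_conj j k :
  embed (Q j) k = diag_mx (\row_a (d 0 ((enum_val a : T) k) == s j)%:R).
Proof.
apply/tidx_matrixP => x y; rewrite embedE [RHS]mxE [X in X *+ _]mxE enum_rankK.
rewrite (inj_eq enum_rank_inj).
rewrite (spectral_proj_conjE sigma_sa sigma_simple sigma_dec).
have [<-|nxy] := eqVneq x y.
  by rewrite eqxx mulr1n; case: forallP => // -[] i; rewrite eqxx implybT.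
rewrite mulr0n; case: forallP => // eq_off_k; case: eqP => // dxk; case/negP: nxy.
apply/eqP/ffunP => i; have [->//|ik] := eqVneq i k.
by have := eq_off_k i; rewrite ik => /eqP.
Qed.

(* If [x k != x l], pick [j] with [s j = d (x l)]: by injectivity of [d],
   [embed (Q j) l] selects the label [x] but [embed (Q j) k] does not, and the SMC
   identity becomes a vanishing sum of nonnegative diagonal terms. *)
Lemma conj_state_diag0 x : ~~ const_tidx x -> rho' (enum_rank x) (enum_rank x) = 0.
Proof.
rewrite negb_forall => /existsP [k]; rewrite negb_forall => /existsP [l nxkl].
have [j sj] := spectral_decomp_surj sigma_sa sigma_dec (x l).
pose ind (i : 'I_m) (a : 'I_N) : C := (d 0 ((enum_val a : T) i) == s j)%:R.
have embedME i (A : 'M[C]_N) a b : (embed (Q j) i *m A) a b = ind i a * A a b.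
  by rewrite embed_spectral_proj_conj mul_diag_mx !mxE.
move/eqP: (esym (conj_SMC j k l)); set R := rho'.
rewrite -[_ *m _ *m R]mulmxA /mxtrace -subr_eq0 -sumrB.
under eq_bigr => a _ do rewrite !embedME mulrA -mulrBl.
have term_ge0 a : 0 <= (ind l a - ind k a * ind l a) * R a a.
  apply: mulr_ge0; last exact/psd_diag_ge0/psdmx_conj.
  by rewrite /ind; do 2 case: (_ == _); rewrite /= ?mulr1 ?mul1r ?mul0r ?subrr ?subr0 ?ler01.
move/eqP/psumr_eq0P => /(_ (fun a _ => term_ge0 a) (enum_rank x) isT).
rewrite /ind !enum_rankK sj eqxx.
have -> : (d 0 (x k) == d 0 (x l)) = false.
  by apply/negbTE; apply: contra nxkl => /eqP/(spectral_diag_inj sigma_sa sigma_simple) ->.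
by rewrite mul0r subr0 mul1r.
Qed.

Lemma conj_state_const : rho' = D *m rho' *m D.
Proof.
have rho'_psd : psdmx rho' by exact: psdmx_conj.
apply/tidx_matrixP => x y; rewrite const_proj_sandwichE.
case cx: (const_tidx x); last first.
  rewrite mulr0n !mul0r.
  by have [->] := psd_diag0 (enum_rank y) rho'_psd (conj_state_diag0 (negbT cx)).
case cy: (const_tidx y); last first.
  rewrite mulr0n !mulr0.
  by have [_ ->] := psd_diag0 (enum_rank x) rho'_psd (conj_state_diag0 (negbT cy)).
by rewrite !mulr1n mul1r mulr1.
Qed.

Lemma SMC_const_support : rho = W *m (D *m rho' *m D) *m W^t*.
Proof.
rewrite -conj_state_const !mulmxA tensmx_spectral_unitary mul1mx.
by rewrite -mulmxA tensmx_spectral_unitary mulmx1.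
Qed.

End SMCSupport.

Section ScalarStates.
Variable C : numClosedFieldType.

Lemma mxtrace_adjM_eq0 k (A : 'M[C]_k) : \tr (A^t* *m A) = 0 -> A = 0.
Proof.
rewrite /mxtrace (eq_bigr (fun i => \sum_j (A j i)^* * A j i)); last first.
  by move=> i _; rewrite mxE; apply: eq_bigr => j _; rewrite !mxE.
have term_ge0 i j : 0 <= (A j i)^* * A j i by rewrite mulrC mul_conjC_ge0.
move/psumr_eq0P => sum0; apply/matrixP => a b; rewrite mxE.
have := sum0 (fun i _ => sumr_ge0 _ (fun j _ => term_ge0 i j)) b isT.
move/psumr_eq0P => /(_ (fun j _ => term_ge0 b j) a isT) /eqP.
by rewrite mulf_eq0 conjC_eq0 orbb => /eqP.
Qed.

Lemma adj_proj_tr0 k (P : 'M[C]_k) : P^t* = P -> P *m P = P -> \tr P = 0 -> P = 0.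
Proof. by move=> P_adj P_idem trP0; apply: mxtrace_adjM_eq0; rewrite P_adj P_idem. Qed.

Lemma scalar_sigmaEC m n (sigma : 'M[C]_n) c : sigmaEC sigma (c%:M : 'M[C]_(tdim m n)).
Proof. by move=> k l; rewrite !mul_mx_scalar !mxtraceZ !mxtrace_embed. Qed.

Lemma scalar_RSC m n c : RSC (c%:M : 'M[C]_(tdim m n)).
Proof.
move=> k l; apply/matrixP => a b.
by rewrite !reduced_mxtrace !mul_scalar_mx !mxtraceZ !mxtrace_embed.
Qed.

Lemma scalar_SSC m n c : SSC (c%:M : 'M[C]_(tdim m n)).
Proof. by move=> pi; rewrite mul_mx_scalar -scalemxAl permU_unitary scalemx1. Qed.

Lemma prod_ord2 (F : 'I_2 -> C) : \prod_i F i = F ord0 * F ord_max.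
Proof. by rewrite !big_ord_recl big_ord0 mulr1; congr (_ * F _); apply: val_inj. Qed.

(* The SMC identity for [k = 0], [l = 1] reads [(tr P)^2 = n tr P], so each
   spectral projector has trace [n], hence is [1], and [sigma] would be scalar. *)
Lemma scalar_not_sigmaSMC n (sigma : 'M[C]_n) c : c != 0 -> (forall a, sigma != a%:M) ->
  ~ sigmaSMC sigma (c%:M : 'M[C]_(tdim 2 n)).
Proof.
move=> c_neq0 sigma_nscalar [r [s [P [[_ projP _ _ sigmaE] SMC]]]].
have P1 j : P j = 1%:M.
  have [P_neq0 [P_sa P_idem]] := projP j.
  have := SMC j ord0 ord_max; rewrite !mul_mx_scalar !mxtraceZ => /(mulfI c_neq0).
  rewrite mxtrace_embed !embed_tensmx tensmxM mxtrace_tensmx prod_ord2 /factor_at /=.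
  rewrite mulmx1 mul1mx mxtrace1 expr1 => /eqP; rewrite -subr_eq0 -mulrBr mulf_eq0 subr_eq0.
  have P_adj := selfadj_adj P_sa.
  case/orP => /eqP trP; first by case/eqP: P_neq0; exact: adj_proj_tr0.
  suff : 1%:M - P j = 0 by move/eqP; rewrite subr_eq0 => /eqP <-.
  apply: adj_proj_tr0.
  - by rewrite linearB /= map_mxB trmx1 map_mx1 P_adj.
  - by rewrite mulmxBl mul1mx mulmxBr mulmx1 P_idem subrr subr0.
  - by rewrite raddfB /= mxtrace1 trP subrr.
case/eqP: (sigma_nscalar (\sum_j s j)).
by rewrite sigmaE (eq_bigr _ (fun j _ => congr1 _ (P1 j))) -scaler_suml scalemx1.
Qed.

Definition maxmixed m n : 'M[C]_(tdim m n) := ((tdim m n)%:R^-1)%:M.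

Lemma maxmixed_density m n : (0 < tdim m n)%N -> density (maxmixed m n).
Proof.
move=> tdim_gt0; split.
  move=> v; rewrite mul_mx_scalar -scalemxAl mxE.
  apply: mulr_ge0; first by rewrite invr_ge0 ler0n.
  by rewrite mxE; apply: sumr_ge0 => i _; rewrite !mxE mulrC mul_conjC_ge0.
by rewrite mxtrace_scalar -(mulr_natr (tdim m n)%:R^-1) mulVf // pnatr_eq0 -lt0n.
Qed.

Definition diag01 : 'M[C]_2 := diag_mx (\row_(i < 2) (i : nat)%:R).

Lemma diag01_selfadj : selfadj diag01.
Proof.
rewrite /selfadj is_hermitianmxE expr0 scale1r; apply/eqP/matrixP => i j.
by rewrite !mxE eq_sym; case: eqP => [->|_]; rewrite ?mulr0n ?rmorph0 // !mulr1n conjC_nat.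
Qed.

Lemma diag01_simple : simple_spectrum diag01.
Proof.
exists (fun i : 'I_2 => (i : nat)%:R); split.
  by move=> i j /eqP; rewrite eqr_nat => /eqP/val_inj.
move=> i; apply/eigenvalueP; exists (delta_mx 0 i).
  apply/matrixP => a b; rewrite mul_mx_diag !mxE.
  by case: (b =P i) => [->|_]; rewrite ?andbT ?andbF ?mul0r ?mulr0 // mulrC.
by apply/negP => /eqP/matrixP/(_ 0 i)/eqP; rewrite !mxE !eqxx oner_eq0.
Qed.

Lemma diag01_nscalar a : diag01 != a%:M.
Proof.
apply/negP => /eqP/matrixP entries.
have := entries ord0 ord0; have := entries ord_max ord_max.
by rewrite !mxE !eqxx /= !mulr1n => <- /eqP; rewrite eq_sym oner_eq0.
Qed.

End ScalarStates.

Unset Implicit Arguments.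

Theorem proposition5 (C : numClosedFieldType) :
  (forall (n m : nat) (sigma : 'M[C]_n) (rho : 'M[C]_(tdim m n)),
      (2 <= n)%N -> (2 <= m)%N -> selfadj sigma -> density rho ->
      (sigmaSMC sigma rho -> sigmaEC sigma rho) /\
      (simple_spectrum sigma -> sigmaSMC sigma rho -> RSC rho) /\
      (simple_spectrum sigma -> sigmaSMC sigma rho -> SSC rho))
  /\ (exists (n m : nat) (sigma : 'M[C]_n) (rho : 'M[C]_(tdim m n)),
      (2 <= n)%N /\ (2 <= m)%N /\ selfadj sigma /\ density rho /\
      sigmaEC sigma rho /\ ~ sigmaSMC sigma rho)
  /\ (exists (n m : nat) (sigma : 'M[C]_n) (rho : 'M[C]_(tdim m n)),
      (2 <= n)%N /\ (2 <= m)%N /\ selfadj sigma /\ density rho /\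
      simple_spectrum sigma /\ RSC rho /\ ~ sigmaSMC sigma rho)
  /\ (exists (n m : nat) (sigma : 'M[C]_n) (rho : 'M[C]_(tdim m n)),
      (2 <= n)%N /\ (2 <= m)%N /\ selfadj sigma /\ density rho /\
      simple_spectrum sigma /\ SSC rho /\ ~ sigmaSMC sigma rho).
Proof.
split.
  move=> n m sigma rho _ m_gt1 sigma_sa [rho_psd _]; split; first exact: sigmaSMC_EC.
  split=> sigma_simple [r [s [P [sigma_dec rho_SMC]]]];
    rewrite (SMC_const_support sigma_sa sigma_simple sigma_dec rho_psd rho_SMC).
    by apply: const_support_RSC; rewrite // trmxCK spectralmx_unitary.
  exact: const_support_SSC.
have tdim_gt0 : (0 < tdim 2 2)%N by rewrite /tdim card_ffun !card_ord.
have not_SMC : ~ sigmaSMC (diag01 C) (maxmixed C 2 2).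
  apply: scalar_not_sigmaSMC; last exact: diag01_nscalar.
  by rewrite invr_eq0 pnatr_eq0 -lt0n.
have witness (Q : Prop) : Q ->
    (2 <= 2)%N /\ (2 <= 2)%N /\ selfadj (diag01 C) /\ density (maxmixed C 2 2) /\ Q.
  move=> HQ; do 2 (split; first by []).
  by split; [exact: diag01_selfadj|split; [exact: maxmixed_density|]].
split; [|split]; exists 2%N, 2%N, (diag01 C), (maxmixed C 2 2); apply: witness.
- by split; [exact: scalar_sigmaEC|].
- by split; [exact: diag01_simple|split; [exact: scalar_RSC|]].
- by split; [exact: diag01_simple|split; [exact: scalar_SSC|]].
Qed.
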